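(* Let $K\ge 2$ and positive integers $M,N,d$ with $d\le\min(M,N)$. If $d\le\min(M,N-1)$, then $(M\times N,d)^K$ is proper if and only if $((M+1)\times(N-1),d)^K$ is proper (equivalently, one is improper iff the other is). Similarly, if $d\le\min(M-1,N)$, then $(M\times N,d)^K$ is proper if and only if $((M-1)\times(N+1),d)^K$ is proper.
   Context: $(M\times N,d)^K$ is the $K$-user interference network where every transmitter has $M$ antennas, every receiver has $N$ antennas and every user demands $d$ degrees of freedom. Associate abstract variables: for each transmitter $j$ and $n\in\{1,\dots,d\}$, $M-d$ variables $x^{[j]}_{n,i}$; for each receiver $k$ and $m\in\{1,\dots,d\}$, $N-d$ variables $y^{[k]}_{m,i}$. Equations are the symbols $E^{mn}_{kj}$ for $j\ne k$, $m,n\in\{1,\dots,d\}$, with $\mathrm{var}(E^{mn}_{kj})=\{x^{[j]}_{n,i}\}_i\cup\{y^{[k]}_{m,i}\}_i$; $\mathcal E$ is the set of all equations. The system is proper if for every $S\subseteq\mathcal E$, $|S|\le\left|\bigcup_{E\in S}\mathrm{var}(E)\right|$, and improper otherwise. *)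

From mathcomp Require Import all_boot.
Set Implicit Arguments. Unset Strict Implicit. Unset Printing Implicit Defensive.

(* Abstract variables of (M x N, d)^K.
   inl (j, n, i) : x^{[j]}_{n,i}, j : transmitter, n < d, i < M - d
   inr (k, m, i) : y^{[k]}_{m,i}, k : receiver,    m < d, i < N - d *)
Definition ia_var (K M N d : nat) : finType :=
  (('I_K * 'I_d * 'I_(M - d)) + ('I_K * 'I_d * 'I_(N - d)))%type.

(* Equation symbols E^{mn}_{kj}, encoded as (k, j, m, n). *)
Definition ia_eqn (K d : nat) : finType := ('I_K * 'I_K * 'I_d * 'I_d)%type.

Definition ia_eqns (K d : nat) : {set ia_eqn K d} :=
  [set E : ia_eqn K d | E.1.1.1 != E.1.1.2].

Definition ia_varE (K M N d : nat) (E : ia_eqn K d) : {set ia_var K M N d} :=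
  let: (k, j, m, n) := E in
  [set (inl (j, n, i) : ia_var K M N d) | i : 'I_(M - d)]
  :|: [set (inr (k, m, i) : ia_var K M N d) | i : 'I_(N - d)].

Definition ia_proper (K M N d : nat) : Prop :=
  forall S : {set ia_eqn K d}, S \subset ia_eqns K d ->
    #|S| <= #|\bigcup_(E in S) ia_varE M N E|.

From mathcomp Require Import all_boot zify.
Set Implicit Arguments. Unset Strict Implicit. Unset Printing Implicit Defensive.

(* For the symmetric network (M x N, d)^K we establish the
   closed-form criterion
       (M x N, d)^K is proper  <->  (K - 1) d <= (M - d) + (N - d),
   from which the corollary is immediate: moving one antenna from a receiver to
   a transmitter (or back) leaves (M - d) + (N - d) unchanged as long as d does
   not exceed either antenna count.
   Necessity: taking S to be all K (K - 1) d^2 equations, properness bounds this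
   by the total number K d (M - d) + K d (N - d) of variables; divide by K d.
   Sufficiency: classify the equations of S by their transmitter stream (j, n)
   and by their receiver stream (k, m).  Each class has at most (K - 1) d
   members, so |S| <= (K - 1) d * min(a, b), where a and b count the streams
   occurring in S; and the variables of S include the M - d (resp. N - d)
   variables of each of these a (resp. b) streams. *)

Lemma card_le_fibers (T J : finType) (S : {set T}) (f : T -> J) (c : nat) :
  (forall y, #|[set x in S | f x == y]| <= c) -> #|S| <= #|f @: S| * c.
Proof.
move=> fiberS; rewrite -sum1_card (partition_big f (mem (f @: S))); last first.
  by move=> x xS; apply: imset_f.
rewrite -sum_nat_const; apply: leq_sum => y _; rewrite sum1_card.
by apply: leq_trans (fiberS y); apply: subset_leq_card; apply/subsetP => x; rewrite !inE.
Qed.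

Lemma card_other_streams (K d : nat) (j : 'I_K) :
  #|[set km : 'I_K * 'I_d | km.1 != j]| = (K - 1) * d.
Proof.
have -> : [set km : 'I_K * 'I_d | km.1 != j] = setX [set~ j] setT.
  by apply/setP => -[k m]; rewrite !inE andbT.
by rewrite cardsX cardsC1 cardsT !card_ord subn1.
Qed.

Section Streams.
Variables K M N d : nat.

Definition tx_stream (E : ia_eqn K d) : 'I_K * 'I_d := (E.1.1.2, E.2).
Definition rx_stream (E : ia_eqn K d) : 'I_K * 'I_d := (E.1.1.1, E.1.2).

(* A transmitter stream (j, n) is involved in the equations E^{mn}_{kj} with
   k != j only, hence in at most (K - 1) d equations. *)
Lemma tx_fiber_bound (S : {set ia_eqn K d}) (s : 'I_K * 'I_d) :
  S \subset ia_eqns K d -> #|[set E in S | tx_stream E == s]| <= (K - 1) * d.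
Proof.
move=> sS; rewrite -(card_other_streams d s.1).
apply: leq_trans (leq_imset_card (fun km : 'I_K * 'I_d => (km.1, s.1, km.2, s.2)) _).
apply: subset_leq_card; apply/subsetP => -[[[k j] m] n].
rewrite !inE => /andP[ES /eqP<-]; apply/imsetP; exists (k, m) => //.
by have := subsetP sS _ ES; rewrite !inE.
Qed.

Lemma rx_fiber_bound (S : {set ia_eqn K d}) (s : 'I_K * 'I_d) :
  S \subset ia_eqns K d -> #|[set E in S | rx_stream E == s]| <= (K - 1) * d.
Proof.
move=> sS; rewrite -(card_other_streams d s.1).
apply: leq_trans (leq_imset_card (fun jn : 'I_K * 'I_d => (s.1, jn.1, s.2, jn.2)) _).
apply: subset_leq_card; apply/subsetP => -[[[k j] m] n].
rewrite !inE => /andP[ES /eqP<-]; apply/imsetP; exists (j, n) => //.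
by have := subsetP sS _ ES; rewrite !inE eq_sym.
Qed.

Definition is_xvar (v : ia_var K M N d) : bool := if v is inl _ then true else false.

(* The variables of S contain the M - d x-variables of each transmitter stream
   and the N - d y-variables of each receiver stream occurring in S; these two
   families are disjoint. *)
Lemma card_vars_ge (S : {set ia_eqn K d}) :
  #|tx_stream @: S| * (M - d) + #|rx_stream @: S| * (N - d)
  <= #|\bigcup_(E in S) ia_varE M N E|.
Proof.
set U := \bigcup_(E in S) _.
rewrite -(cardsID [set v | is_xvar v] U).
pose xvar (si : ('I_K * 'I_d) * 'I_(M - d)) : ia_var K M N d :=
  inl (si.1.1, si.1.2, si.2).
pose yvar (si : ('I_K * 'I_d) * 'I_(N - d)) : ia_var K M N d :=
  inr (si.1.1, si.1.2, si.2).
have xvar_inj : injective xvar by move=> [[? ?] ?] [[? ?] ?] [-> -> ->].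
have yvar_inj : injective yvar by move=> [[? ?] ?] [[? ?] ?] [-> -> ->].
apply: leq_add.
- rewrite -(card_ord (M - d)) -cardsT -cardsX -(card_imset _ xvar_inj).
  apply: subset_leq_card; apply/subsetP => _ /imsetP[[s i] sS ->].
  move: sS; rewrite !inE /= andbT => /imsetP[[[[k j] m] n] ES ->].
  rewrite andbT; apply/bigcupP; exists (k, j, m, n) => //.
  by rewrite /ia_varE inE; apply/orP; left; apply/imsetP; exists i.
- rewrite -(card_ord (N - d)) -cardsT -cardsX -(card_imset _ yvar_inj).
  apply: subset_leq_card; apply/subsetP => _ /imsetP[[s i] sS ->].
  move: sS; rewrite !inE /= andbT => /imsetP[[[[k j] m] n] ES ->].
  apply/bigcupP; exists (k, j, m, n) => //.
  by rewrite /ia_varE inE; apply/orP; right; apply/imsetP; exists i.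
Qed.

End Streams.

(* The arithmetic core of sufficiency: if s <= a c and s <= b c with
   c <= p + q, then s <= a p + b q (use the smaller of a and b). *)
Lemma le_weighted_sum (s a b c p q : nat) :
  s <= a * c -> s <= b * c -> c <= p + q -> s <= a * p + b * q.
Proof.
move=> sa sb cpq; case: (leqP a b) => ab.
- apply: leq_trans sa _; apply: leq_trans (leq_mul (leqnn a) cpq) _.
  by rewrite mulnDr leq_add2l leq_mul2r ab orbT.
- apply: leq_trans sb _; apply: leq_trans (leq_mul (leqnn b) cpq) _.
  by rewrite mulnDr leq_add2r leq_mul2r (ltnW ab) orbT.
Qed.

Lemma proper_of_count (K M N d : nat) :
  (K - 1) * d <= (M - d) + (N - d) -> ia_proper K M N d.
Proof.
move=> count S sS; apply: leq_trans (card_vars_ge M N S).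
apply: le_weighted_sum count.
- exact: card_le_fibers (fun s => tx_fiber_bound s sS).
- exact: card_le_fibers (fun s => rx_fiber_bound s sS).
Qed.

Lemma card_offdiag (K : nat) : #|[set kj : 'I_K * 'I_K | kj.1 != kj.2]| = K * (K - 1).
Proof.
have diag_inj : injective (fun k : 'I_K => (k, k)) by move=> k l [].
rewrite cardsCs (_ : ~: _ = [set (k, k) | k : 'I_K]).
  by rewrite (card_imset _ diag_inj) card_prod !card_ord mulnBr muln1.
apply/setP => -[k j]; rewrite !inE negbK.
by apply/eqP/imsetP => [/= ->| [l _ [-> ->]]]; first by exists j.
Qed.

Lemma card_ia_eqns (K d : nat) : #|ia_eqns K d| = K * (K - 1) * d * d.
Proof.
have -> : ia_eqns K d = setX (setX [set kj : 'I_K * 'I_K | kj.1 != kj.2] setT) setT.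
  by apply/setP => -[[[k j] m] n]; rewrite !inE !andbT.
by rewrite !cardsX !cardsT !card_ord card_offdiag.
Qed.

Lemma count_of_proper (K M N d : nat) : 0 < d ->
  ia_proper K M N d -> (K - 1) * d <= (M - d) + (N - d).
Proof.
move=> d_gt0 properS.
have := leq_trans (properS _ (subxx _)) (max_card _).
rewrite card_ia_eqns card_sum !card_prod !card_ord.
case: K {properS} => [|K] //= count; rewrite -(@leq_pmul2l (K.+1 * d)) ?muln_gt0 //.
by rewrite subSS subn0 in count *; lia.
Qed.

Lemma proper_iff_count (K M N d : nat) : 0 < d ->
  ia_proper K M N d <-> (K - 1) * d <= (M - d) + (N - d).
Proof. by move=> d_gt0; split; [apply: count_of_proper | apply: proper_of_count]. Qed.

Theorem corollary2 (K M N d : nat) :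
  2 <= K -> 0 < M -> 0 < N -> 0 < d -> d <= minn M N ->
  (d <= minn M (N - 1) -> (ia_proper K M N d <-> ia_proper K (M + 1) (N - 1) d)) /\
  (d <= minn (M - 1) N -> (ia_proper K M N d <-> ia_proper K (M - 1) (N + 1) d)).
Proof.
move=> _ M_gt0 N_gt0 d_gt0; rewrite leq_min => /andP[dM dN].
split; rewrite leq_min => /andP[dM' dN']; rewrite !proper_iff_count //.
- by have -> : M + 1 - d + (N - 1 - d) = M - d + (N - d) by lia.
- by have -> : M - 1 - d + (N + 1 - d) = M - d + (N - d) by lia.
Qed.
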